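(* Let $A$ be a finite additive poset and $a\in A$ nonzero. The following are equivalent: (i) $a$ is a tile; (ii) the tail $A_a$ is isomorphic (as an additive poset) to an additive powerset $2^I$ for some set $I$; (iii) all atoms of $A_a$ are pairwise independent and their sum equals $a$; (iv) the expansion of $a$ as a sum of pairwise independent atoms of $A$ is unique up to permutation of the atoms.
   Context: An additive poset is a pair $(A,\le)$ where $A$ is an abelian group and $\le$ is a partial order on $A$ such that for all $a,b,c\in A$: $(\ast)$ if $b\le a$ and $c\le a$ then $b+c\le a$; $(\ast\ast)$ if $a\le b$ and $a\le c$ then $a\le a+b+c$. The tail $A_a=\{x:x\le a\}$ is an additive subposet. Elements $x,y$ are independent if $x\le x+y$. An atom is a nonzero $x$ with $A_x=\{0,x\}$. A tile is a nonzero $a$ such that any two distinct atoms of $A$ in $A_a$ are independent. For a set $I$, the additive powerset $2^I$ is the set of subsets of $I$ with symmetric difference as addition and inclusion as order. Isomorphism of additive posets means a bijection which is a group and order isomorphism. *)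

From HB Require Import structures.
From mathcomp Require Import all_boot all_order all_algebra.
Set Implicit Arguments. Unset Strict Implicit. Unset Printing Implicit Defensive.
Import GRing.Theory.
Local Open Scope ring_scope.

Definition additive_poset (A : zmodType) (le : rel A) : Prop :=
  [/\ reflexive le, antisymmetric le, transitive le,
      (forall a b c : A, le b a -> le c a -> le (b + c) a) &
      (forall a b c : A, le a b -> le a c -> le a (a + b + c))].

Definition tail (A : finZmodType) (le : rel A) (a : A) : {set A} :=
  [set x | le x a].

(* x is an atom of the subposet S (with the induced order):
   x in S, x nonzero, and {y in S | y <= x} = {0, x}.
   Atoms of A itself are atoms of [set: A]. *)
Definition atom_of (A : finZmodType) (le : rel A) (S : {set A}) (x : A) : bool :=
  [&& x \in S, x != 0 & [set y in S | le y x] == [set 0; x]].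

Definition indep (A : zmodType) (le : rel A) (x y : A) : bool := le x (x + y).

(* two-sided independence, used for "pairwise independent" families *)
Definition indep2 (A : zmodType) (le : rel A) (x y : A) : bool :=
  indep le x y && indep le y x.

Definition tile (A : finZmodType) (le : rel A) (a : A) : Prop :=
  a != 0 /\
  forall x y : A, atom_of le [set: A] x -> atom_of le [set: A] y ->
    x \in tail le a -> y \in tail le a -> x != y -> indep le x y.

(* symmetric difference: the addition of the additive powerset 2^I *)
Definition symdiff (I : finType) (S T : {set I}) : {set I} := (S :\: T) :|: (T :\: S).

(* The tail A_a (with restricted addition and order) is isomorphic to 2^I:
   f restricted to A_a is a bijection onto {set I}, additive (+ to symmetric
   difference) and an order isomorphism (le to inclusion). *)
Definition tail_iso_powerset (A : finZmodType) (le : rel A) (a : A)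
    (I : finType) (f : A -> {set I}) : Prop :=
  [/\ {in tail le a &, injective f},
      (forall S : {set I}, exists2 x, x \in tail le a & f x = S),
      {in tail le a &, forall x y, f (x + y) = symdiff (f x) (f y)} &
      {in tail le a &, forall x y, le x y = (f x \subset f y)}].

Definition indep_atom_expansion (A : finZmodType) (le : rel A) (a : A) (s : seq A) : Prop :=
  [/\ all (atom_of le [set: A]) s, pairwise (indep2 le) s & \sum_(x <- s) x = a].

From HB Require Import structures.
From mathcomp Require Import all_boot all_order all_algebra all_fingroup.
Import GRing.Theory FinRing.Theory.
Local Open Scope ring_scope.

(* In a finite additive poset every element has order two: some multiple
   x *+ n.+1 equals 0, resp. -x, and multiples of x stay below x by ( * ).
   Independence is then symmetric and hereditary: if x <= x + z and y <= z
   then y <= y + x.  Hence, when the atoms below a are pairwise independent,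
   each x <= a is the sum of the atoms below it, and sending x to the set of
   atoms below it identifies A_a with the powerset of the atoms below a; the
   list of these atoms is then the only independent expansion of a, since an
   atom z <= a is independent of every sum not containing it and z <= a
   forbids z <= z + a.  Conversely, if the expansion of a is unique then every
   atom z <= a occurs in it, because z followed by an expansion of z + a is
   another one. *)

Set Implicit Arguments. Unset Strict Implicit.

Lemma pairwise_sym_neq (T : eqType) (r : rel T) (s : seq T) :
  symmetric r -> pairwise r s -> {in s &, forall x y, x != y -> r x y}.
Proof.
move=> r_sym; elim: s => // u s IH; rewrite pairwise_cons => /andP[/allP ru rs].
move=> x y; rewrite !inE => /orP[/eqP->|xs] /orP[/eqP->|ys] nxy.
- by rewrite eqxx in nxy.
- exact: ru.
- by rewrite r_sym ru.
- exact: IH.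
Qed.

Lemma pairwise_neq_uniq (T : eqType) (r : rel T) (s : seq T) :
  uniq s -> {in s &, forall x y, x != y -> r x y} -> pairwise r s.
Proof.
rewrite uniq_pairwise => s_neq r_neq.
by apply: (sub_in_pairwise (P := mem s)) s_neq; first exact: r_neq; apply/allP.
Qed.

Section AdditivePoset.
Variables (A : finZmodType) (le : rel A).
Hypothesis hA : additive_poset le.
Implicit Types a b c x y z : A.

Local Notation atom := (atom_of le [set: A]).

Lemma le_refl x : le x x.
Proof. by case: hA. Qed.

Lemma le_anti x y : le x y -> le y x -> x = y.
Proof. by case: hA => _ anti _ _ _ xy yx; apply: anti; rewrite xy yx. Qed.

Lemma le_trans x y z : le x y -> le y z -> le x z.
Proof. by case: hA => _ _ trans _ _; apply: trans. Qed.

Lemma le_add a b c : le b a -> le c a -> le (b + c) a.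
Proof. by case: hA => _ _ _ add _; apply: add. Qed.

Lemma le_add3 a b c : le a b -> le a c -> le a (a + b + c).
Proof. by case: hA => _ _ _ _ add3; apply: add3. Qed.

Lemma le_muln x y n : le x y -> le (x *+ n.+1) y.
Proof.
move=> xy; elim: n => [|n IH]; first by rewrite mulr1n.
by rewrite mulrS le_add.
Qed.

Lemma le0x x : le 0 x.
Proof.
have := expg_order x; rewrite zmodXgE zmod1gE -(prednK (order_gt0 x)) => <-.
exact/le_muln/le_refl.
Qed.

Lemma leNx x : le (- x) x.
Proof.
have /eqP := expg_order x.
rewrite zmodXgE zmod1gE -(prednK (order_gt0 x)) mulrS addrC addr_eq0 => /eqP <-.
by case: (#[x]%g.-1) => [|n]; [rewrite mulr0n le0x | exact/le_muln/le_refl].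
Qed.

Lemma oppr_id x : - x = x.
Proof. by apply: le_anti (leNx x) _; rewrite -{1}(opprK x) leNx. Qed.

Lemma addrr x : x + x = 0.
Proof. by rewrite -{1}(oppr_id x) addNr. Qed.

Lemma indep_sym x y : indep le x y -> indep le y x.
Proof.
move=> xy; suff : le (x + (x + y)) (x + y) by rewrite addrA addrr add0r addrC.
by rewrite le_add // le_refl.
Qed.

Lemma indep_le x y z : indep le x z -> le y z -> indep le x y.
Proof.
move=> xz yz; have yzx : le y (z + x) by apply: le_trans yz (indep_sym xz).
by apply: indep_sym; have := le_add3 yz yzx; rewrite -addrA (addrA z) addrr add0r.
Qed.

Lemma indep_add x y z : indep le x y -> indep le x z -> indep le x (y + z).
Proof.
move=> xy xz; have := le_add3 xy xz.
by rewrite /indep [x + (x + y)]addrA addrr add0r addrCA.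
Qed.

Lemma le_indep_add x y z : le x y -> indep le x z -> le x (y + z).
Proof. by move=> xy xz; have := le_add3 xy xz; rewrite addrACA addrr add0r. Qed.

Lemma le_indep_eq0 x b : le x b -> indep le x b -> x = 0.
Proof.
move=> xb xxb; apply: le_anti _ (le0x _).
by have := le_add3 xb xxb; rewrite addrr.
Qed.

Lemma le_sum (I : Type) (r : seq I) (P : pred I) (F : I -> A) b :
  (forall i, P i -> le (F i) b) -> le (\sum_(i <- r | P i) F i) b.
Proof. by move=> FP; apply: (big_ind (le^~ b)) => //; [exact: le0x | exact: le_add]. Qed.

Lemma indep_sum (I : Type) (r : seq I) (P : pred I) (F : I -> A) x :
  (forall i, P i -> indep le x (F i)) -> indep le x (\sum_(i <- r | P i) F i).
Proof.
move=> FP; apply: (big_ind (indep le x)) => //; last exact: indep_add.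
by rewrite /indep addr0 le_refl.
Qed.

Lemma le_sum_pairwise (s : seq A) x :
  pairwise (indep2 le) s -> x \in s -> le x (\sum_(y <- s) y).
Proof.
elim: s => // y s IH; rewrite pairwise_cons big_cons => /andP[/allP ys s_pw].
have y_indep : indep le y (\sum_(z <- s) z).
  by rewrite big_seq; apply: indep_sum => z zs; case/andP: (ys z zs).
rewrite inE => /orP[/eqP-> // | xs].
by apply: le_trans (IH s_pw xs) _; rewrite addrC; apply: indep_sym.
Qed.

Lemma card_tail_lt y b : le y b -> y != b -> (#|tail le y| < #|tail le b|)%N.
Proof.
move=> yb ynb; apply/proper_card/properP; split.
  by apply/subsetP => w; rewrite !inE => wy; apply: le_trans wy yb.
exists b; rewrite !inE ?le_refl //.
by apply: contra ynb => byb; apply/eqP/le_anti.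
Qed.

Lemma tail_ind (P : A -> Prop) :
  (forall b, (forall y, le y b -> y != b -> P y) -> P b) -> forall b, P b.
Proof.
move=> IH b; move: {2}#|tail le b| (leqnn #|tail le b|) => n.
elim: n b => [|n IHn] b bn.
  by move: bn; rewrite leqn0 => /eqP/cards0_eq/setP/(_ b); rewrite !inE le_refl.
apply: IH => y yb ynb; apply: IHn; rewrite -ltnS.
exact: leq_trans (card_tail_lt yb ynb) bn.
Qed.

Lemma atomP x : reflect (x != 0 /\ forall y, le y x -> y = 0 \/ y = x) (atom x).
Proof.
rewrite /atom_of in_setT /=; apply: (iffP andP) => [[x0 /eqP E]|[x0 below]].
  split=> // y yx; have : y \in [set y in [set: A] | le y x] by rewrite !inE yx.
  by rewrite E !inE => /orP[]/eqP->; [left|right].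
split=> //; apply/eqP/setP => y; rewrite !inE; apply/idP/idP.
  by case/below => ->; rewrite eqxx ?orbT.
by case/orP => /eqP->; [exact: le0x | exact: le_refl].
Qed.

Lemma atom_neq0 x : atom x -> x != 0.
Proof. by case/atomP. Qed.

Lemma atom_not_indep z b : atom z -> le z b -> ~ indep le z b.
Proof.
move=> az zb /(le_indep_eq0 zb) z0.
by move: (atom_neq0 az); rewrite z0 eqxx.
Qed.

Lemma atom_tail a x : atom_of le (tail le a) x = atom x && le x a.
Proof.
rewrite /atom_of /tail inE in_setT /=; case xa: (le x a); last by rewrite andbF.
rewrite andbT; congr (_ && (_ == _)); apply/setP => y; rewrite !inE.
by case yx: (le y x); rewrite ?andbF ?andbT // (le_trans yx xa).
Qed.

Lemma exists_atom b : b != 0 -> exists2 z, atom z & le z b.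
Proof.
elim/tail_ind: b => b IH b0.
case: (boolP [exists y, [&& le y b, y != 0 & y != b]]) => [|no_mid].
  case/existsP => y /and3P[yb y0 ynb]; have [z az zy] := IH y yb ynb y0.
  by exists z => //; apply: le_trans zy yb.
exists b; last exact: le_refl.
apply/atomP; split=> // y yb; move/existsPn/(_ y): no_mid.
by rewrite yb /= negb_and !negbK => /orP[]/eqP; [left|right].
Qed.

Definition atoms_indep a :=
  forall x y, atom x -> atom y -> le x a -> le y a -> x != y -> indep le x y.

Definition atom_sum a := \sum_(z | atom z && le z a) z.

Lemma tileP a : a != 0 -> tile le a <-> atoms_indep a.
Proof.
move=> a0; split=> [[_ P] x y ax ay xa ya|P]; first by apply: P; rewrite ?inE.
by split=> // x y ax ay; rewrite !inE; apply: P.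
Qed.

Lemma atoms_indep_tail a : atoms_indep a <->
  (forall x y, atom_of le (tail le a) x -> atom_of le (tail le a) y ->
     x != y -> indep le x y).
Proof.
split=> [P x y|P x y ax ay xa ya]; last by apply: P; rewrite atom_tail ?ax ?ay.
by rewrite !atom_tail => /andP[ax xa] /andP[ay ya]; apply: P.
Qed.

Lemma atom_sum_tail a : \sum_(x | atom_of le (tail le a) x) x = atom_sum a.
Proof. by apply: eq_bigl => x; rewrite atom_tail. Qed.

Lemma atoms_indep_le a b : atoms_indep a -> le b a -> atoms_indep b.
Proof. by move=> P ba x y ax ay xb yb; apply: P => //; apply: le_trans ba. Qed.

Lemma le_atom_sum a x : atoms_indep a -> atom x -> le x a -> le x (atom_sum a).
Proof.
move=> P ax xa; rewrite /atom_sum (bigD1 x) /= ?ax ?xa //.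
by apply: indep_sum => y /andP[/andP[ay ya] yx]; apply: P; rewrite // eq_sym.
Qed.

Lemma atom_sumE a : atoms_indep a -> atom_sum a = a.
Proof.
move=> P; have Sa : le (atom_sum a) a by apply: le_sum => y /andP[].
apply/eqP; rewrite -subr_eq0 oppr_id; apply/negPn/negP => Sa0.
have [z az zSa] := exists_atom Sa0.
have za : le z a := le_trans zSa (le_add Sa (le_refl a)).
apply: (atom_not_indep az za).
by have := le_add3 zSa (le_atom_sum P az za); rewrite /indep -addrA addrAC addrr add0r.
Qed.

Lemma atom_indep_of_nle a z x : atoms_indep a ->
  atom z -> le z a -> le x a -> ~~ le z x -> indep le z x.
Proof.
move=> P az za xa zx; rewrite -(atom_sumE (atoms_indep_le P xa)).
apply: indep_sum => w /andP[aw wx]; apply: P => //; first exact: le_trans wx xa.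
by apply: contraNneq zx => ->.
Qed.

Section TailPowerset.
Variable a : A.
Hypothesis Pa : atoms_indep a.

Definition tail_atom := {z : A | atom z && le z a}.

Definition atoms_le x : {set tail_atom} := [set i | le (val i) x].

Lemma tail_atomP (i : tail_atom) : atom (val i) /\ le (val i) a.
Proof. by case/andP: (valP i). Qed.

Lemma le_atoms_le x y : le x a -> le y a -> le x y = (atoms_le x \subset atoms_le y).
Proof.
move=> xa ya; apply/idP/subsetP => [xy i|sub].
  by rewrite !inE => ix; apply: le_trans ix xy.
rewrite -(atom_sumE (atoms_indep_le Pa xa)); apply: le_sum => z /andP[az zx].
have zi : atom z && le z a by rewrite az (le_trans zx xa).
by have := sub (exist _ z zi); rewrite !inE; apply.
Qed.

Lemma atoms_le_add x y : le x a -> le y a ->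
  atoms_le (x + y) = symdiff (atoms_le x) (atoms_le y).
Proof.
move=> xa ya; apply/setP => i; rewrite /symdiff !inE.
have [az za] := tail_atomP i; move: (val i) az za => z az za.
have indep_nle := atom_indep_of_nle Pa az za.
case zx: (le z x); case zy: (le z y) => /=.
- apply/negP => zxy; apply: (atom_not_indep az zxy).
  by rewrite /indep addrA; apply: le_add3.
- exact: le_indep_add zx (indep_nle _ ya (negbT zy)).
- by rewrite addrC; apply: le_indep_add zy (indep_nle _ xa (negbT zx)).
- apply/negP => zxy; apply: (atom_not_indep az zxy).
  exact: indep_add (indep_nle _ xa (negbT zx)) (indep_nle _ ya (negbT zy)).
Qed.

Lemma atoms_le_sum (S : {set tail_atom}) : atoms_le (\sum_(i in S) val i) = S.
Proof.
apply/setP => i; rewrite inE; have [ai ia] := tail_atomP i.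
have indep_others (P : pred tail_atom) : (forall j, P j -> j != i) ->
    indep le (val i) (\sum_(j | P j) val j).
  move=> Pi; apply: indep_sum => j /Pi ji; have [aj ja] := tail_atomP j.
  by apply: Pa; rewrite // (inj_eq val_inj) eq_sym.
have [iS|iNS] := boolP (i \in S).
  by rewrite (bigD1 i iS) /=; apply: indep_others => j /andP[].
apply/negP => le_i; apply: (atom_not_indep ai le_i).
by apply: indep_others => j jS; apply: contraNneq iNS => <-.
Qed.

Lemma atoms_indep_tail_iso : tail_iso_powerset le a atoms_le.
Proof.
split=> [x y||x y|x y]; rewrite /tail ?inE.
- by move=> xa ya fxy; apply: le_anti; rewrite le_atoms_le // fxy subxx.
- move=> S; exists (\sum_(i in S) val i); last exact: atoms_le_sum.
  by rewrite inE; apply: le_sum => i _; case: (tail_atomP i).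
- exact: atoms_le_add.
- exact: le_atoms_le.
Qed.

End TailPowerset.

Lemma tail_iso_powerset_atoms_indep a (I : finType) (f : A -> {set I}) :
  tail_iso_powerset le a f -> atoms_indep a.
Proof.
case=> _ f_onto f_add f_le x y ax ay xa ya xy.
have t x' : le x' a -> x' \in tail le a by rewrite inE.
have f0 : f 0 = set0.
  by have := f_add 0 0 (t _ (le0x a)) (t _ (le0x a)); rewrite addr0 /symdiff setDv setU0.
rewrite /indep (f_le _ _ (t _ xa) (t _ (le_add xa ya))) (f_add _ _ (t _ xa) (t _ ya)).
apply/subsetP => i xi; rewrite /symdiff !inE xi andbT orbC; apply/negP => yi.
have [w wa fw] := f_onto [set i]; rewrite inE in wa.
have w0 : w != 0 by apply: contraTneq (set11 i) => w0; rewrite -fw w0 f0 inE.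
have wx : le w x by rewrite (f_le _ _ (t _ wa) (t _ xa)) fw sub1set.
have wy : le w y by rewrite (f_le _ _ (t _ wa) (t _ ya)) fw sub1set.
case/atomP: ax => _ /(_ w wx) [w0'|wex]; first by rewrite w0' eqxx in w0.
case/atomP: ay => _ /(_ w wy) [w0'|wey]; first by rewrite w0' eqxx in w0.
by rewrite -wex -wey eqxx in xy.
Qed.

Lemma indep_atom_expansion_cons z c t : atom z -> indep le z c ->
  indep_atom_expansion le c t -> indep_atom_expansion le (z + c) (z :: t).
Proof.
move=> az zc [t_atoms t_pw tc]; split; [by rewrite /= az | | by rewrite big_cons tc].
rewrite pairwise_cons t_pw andbT; apply/allP => y yt.
have zy : indep le z y by apply: indep_le zc _; rewrite -tc le_sum_pairwise.
by rewrite /indep2 zy indep_sym.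
Qed.

Lemma indep_atom_expansion_exists b : exists t, indep_atom_expansion le b t.
Proof.
elim/tail_ind: b => b IH.
have [->|b0] := eqVneq b 0; first by exists [::]; split; rewrite ?big_nil.
have [z az zb] := exists_atom b0.
have zbb : le (z + b) b by rewrite le_add ?le_refl.
have zbnb : z + b != b by rewrite -{2}[b]add0r (inj_eq (addIr b)) atom_neq0.
have [t t_exp] := IH _ zbb zbnb.
exists (z :: t); have := indep_atom_expansion_cons az _ t_exp.
by rewrite /indep !addrA !addrr !add0r; apply.
Qed.

Lemma indep_atom_expansion_uniq b t : indep_atom_expansion le b t -> uniq t.
Proof.
case=> t_atoms t_pw _; rewrite uniq_pairwise.
apply: (sub_in_pairwise (P := atom)) t_atoms t_pw => x y ax _ /andP[xy _] /=.
by apply: contraTneq xy => <-; apply/negP/atom_not_indep/le_refl.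
Qed.

Lemma mem_indep_atom_expansion a t x : atoms_indep a ->
  indep_atom_expansion le a t -> (x \in t) = atom x && le x a.
Proof.
move=> P [t_atoms t_pw ta]; apply/idP/andP => [xt|[ax xa]].
  by split; [exact: (allP t_atoms) | rewrite -ta le_sum_pairwise].
apply/negPn/negP => xt; apply: (atom_not_indep ax xa).
rewrite -ta big_seq; apply: indep_sum => y yt.
apply: P => //; first exact: (allP t_atoms).
  by rewrite -ta le_sum_pairwise.
by apply: contraNneq xt => ->.
Qed.

Lemma atoms_indep_unique_expansion a : atoms_indep a ->
  exists s, indep_atom_expansion le a s /\
    forall t, indep_atom_expansion le a t -> perm_eq s t.
Proof.
move=> P; pose s := enum [pred x | atom x && le x a].
have s_exp : indep_atom_expansion le a s.
  split; first by apply/allP => x; rewrite mem_enum => /andP[].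
    apply: pairwise_neq_uniq (enum_uniq _) _ => x y.
    rewrite !mem_enum => /andP[ax xa] /andP[ay ya] xy.
    by rewrite /indep2 !P // eq_sym.
  by rewrite big_enum -[RHS](atom_sumE P).
exists s; split=> // t t_exp; apply: uniq_perm.
- exact: indep_atom_expansion_uniq s_exp.
- exact: indep_atom_expansion_uniq t_exp.
- by move=> x; rewrite (mem_indep_atom_expansion _ P s_exp) (mem_indep_atom_expansion _ P t_exp).
Qed.

Lemma unique_expansion_atoms_indep a :
  (exists s, indep_atom_expansion le a s /\
     forall t, indep_atom_expansion le a t -> perm_eq s t) -> atoms_indep a.
Proof.
case=> s [s_exp s_uniq].
have atom_in_s z : atom z -> le z a -> z \in s.
  move=> az za; have [t t_exp] := indep_atom_expansion_exists (z + a).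
  have := indep_atom_expansion_cons az _ t_exp.
  rewrite addrA addrr add0r /indep addrA addrr add0r => /(_ za) /s_uniq/perm_mem->.
  exact: mem_head.
case: s_exp => _ s_pw _ x y ax ay xa ya.
have indep2_sym : symmetric (indep2 le) by move=> u v; rewrite /indep2 andbC.
by move=> /(pairwise_sym_neq indep2_sym s_pw (atom_in_s _ ax xa) (atom_in_s _ ay ya))/andP[].
Qed.

End AdditivePoset.

Unset Implicit Arguments. Set Strict Implicit.

Theorem theorem6p4 (A : finZmodType) (le : rel A) (hA : additive_poset le)
    (a : A) (ha : a != 0) :
  [<-> (* (i) *) tile le a;
       (* (ii) *) exists (I : finType) (f : A -> {set I}), tail_iso_powerset le a f;
       (* (iii) *) (forall x y : A, atom_of le (tail le a) x -> atom_of le (tail le a) y ->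
                      x != y -> indep le x y)
                   /\ \sum_(x | atom_of le (tail le a) x) x = a;
       (* (iv) *) exists s : seq A, indep_atom_expansion le a s /\
                   forall t : seq A, indep_atom_expansion le a t -> perm_eq s t].
Proof.
tfae.
- move/(tileP le ha) => Pa.
  by exists (tail_atom le a), (atoms_le le a); apply: atoms_indep_tail_iso.
- case=> I [f /(tail_iso_powerset_atoms_indep hA) Pa].
  by split; [apply/(atoms_indep_tail hA) | rewrite (atom_sum_tail hA) (atom_sumE hA)].
- by case=> /(atoms_indep_tail hA) Pa _; apply: atoms_indep_unique_expansion.
- by move/(unique_expansion_atoms_indep hA)/(tileP le ha).
Qed.
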